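(* Let $H$ be a Hilbert space and let $T$ be a densely defined closed operator on $H$ which is quasinormal and EP. Then $w(T^{n}) = (w(T))^{n}$ for all $n \in \mathbb{N}$.
   Context: For a densely defined closed operator $A$ from $D(A)\subset H$ into a Hilbert space $K$, $A^{*}$ is its adjoint, $N(A)$ its null space, $R(A)$ its range, and $C(A)=D(A)\cap N(A)^{\perp}$. When $R(A)$ is closed, the Moore–Penrose inverse $A^{\dagger}$ is the operator defined on $R(A)\oplus^{\perp}R(A)^{\perp}$ by $A^{\dagger}y=(A|_{C(A)})^{-1}y$ for $y\in R(A)$ and $A^{\dagger}y=0$ for $y\in R(A)^{\perp}$; it is bounded. The generalized Cauchy dual of $A$ is $w(A)=A(A^{*}A)^{\dagger}$ (products of unbounded operators taken on their natural domains). A densely defined closed operator $T$ on $H$ is EP if $R(T)$ is closed and $R(T)=R(T^{*})$. It is quasinormal if $T(T^{*}T)=(T^{*}T)T$ (equality of operators including domains). *)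

From mathcomp Require Import all_boot all_algebra.
From mathcomp Require Import complex.
From mathcomp Require Import all_classical reals.

Set Implicit Arguments.
Unset Strict Implicit.
Unset Printing Implicit Defensive.

Import GRing.Theory Num.Theory.
Local Open Scope ring_scope.
Local Open Scope classical_set_scope.

Section Hilbert.
Variables (R : realType) (V : lmodType R[i]) (ip : V -> V -> R[i]).

Definition inner_product : Prop :=
  [/\ forall (a : R[i]) (x y z : V), ip (a *: x + y) z = a * ip x z + ip y z,
      forall x y : V, ip x y = (ip y x)^*,
      forall x : V, 0 <= ip x x
    & forall x : V, ip x x = 0 -> x = 0].

Definition dist2 (x y : V) : R[i] := ip (x - y) (x - y).

Definition converges (u : nat -> V) (x : V) : Prop :=
  forall e : R[i], 0 < e -> exists N : nat, forall n, (N <= n)%N -> dist2 (u n) x < e.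

Definition cauchy (u : nat -> V) : Prop :=
  forall e : R[i], 0 < e -> exists N : nat,
    forall n m, (N <= n)%N -> (N <= m)%N -> dist2 (u n) (u m) < e.

Definition hilbert_space : Prop :=
  inner_product /\ forall u, cauchy u -> exists x, converges u x.

Definition is_closed (S : set V) : Prop :=
  forall (u : nat -> V) (x : V), (forall n, S (u n)) -> converges u x -> S x.

Definition is_dense (S : set V) : Prop :=
  forall (x : V) (e : R[i]), 0 < e -> exists2 y, S y & dist2 x y < e.

Definition is_subspace (S : set V) : Prop :=
  S 0 /\ forall (a : R[i]) (x y : V), S x -> S y -> S (a *: x + y).

(* A (possibly unbounded) operator on V: its domain and its action
   (the values outside the domain are irrelevant). *)
Record op := Op { dom : set V ; app : V -> V }.

Definition op_eq (A B : op) : Prop :=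
  dom A = dom B /\ forall x, dom A x -> app A x = app B x.

Definition densely_defined_closed (A : op) : Prop :=
  [/\ is_subspace (dom A),
      forall (a : R[i]) (x y : V), dom A x -> dom A y ->
        app A (a *: x + y) = a *: app A x + app A y,
      is_dense (dom A)
    & forall (u : nat -> V) (x y : V), (forall n, dom A (u n)) ->
        converges u x -> converges (fun n => app A (u n)) y ->
        dom A x /\ app A x = y].

Definition comp (A B : op) : op :=
  Op [set x | dom B x /\ dom A (app B x)] (fun x => app A (app B x)).

Definition id_op : op := Op setT id.

Fixpoint op_pow (A : op) (n : nat) : op :=
  match n with 0 => id_op | n'.+1 => comp A (op_pow A n') end.

Definition null_space (A : op) : set V := [set x | dom A x /\ app A x = 0].
Definition range (A : op) : set V := [set y | exists2 x, dom A x & app A x = y].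
Definition orth (S : set V) : set V := [set y | forall x, S x -> ip x y = 0].

Definition coimage (A : op) : set V := dom A `&` orth (null_space A).

Definition adj_rel (A : op) (y z : V) : Prop :=
  forall x, dom A x -> ip (app A x) y = ip x z.
Definition adjoint (A : op) : op :=
  Op [set y | exists z, adj_rel A y z] (fun y => xget 0 (adj_rel A y)).

Definition range_part (A : op) (y : V) : V :=
  xget 0 [set r | range A r /\ orth (range A) (y - r)].

(* Moore–Penrose inverse, defined on R(A) ⊕^⊥ R(A)^⊥ by
   A^† (r + s) = (A|_{C(A)})^{-1} r  (r ∈ R(A), s ∈ R(A)^⊥);
   meaningful when R(A) is closed. *)
Definition mp_inverse (A : op) : op :=
  Op [set y | exists r s, [/\ range A r, orth (range A) s & y = r + s]]
     (fun y => xget 0 [set x | coimage A x /\ app A x = range_part A y]).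

Definition cauchy_dual (A : op) : op :=
  comp A (mp_inverse (comp (adjoint A) A)).

Definition EP (T : op) : Prop :=
  is_closed (range T) /\ range T = range (adjoint T).

Definition quasinormal (T : op) : Prop :=
  op_eq (comp T (comp (adjoint T) T)) (comp (comp (adjoint T) T) T).

End Hilbert.

(* Write M = R(T), N = N(T), A = T^* T, g = A^dagger and w = T g = w(T).
   Projecting (s, 0) onto the closed graph of T shows R(T^* )^perp <= N; as T
   is EP, R(T^* ) = M, so M^perp = N and N^perp = M.  Hence R(A) = M, N(A) = N,
   and g y is the unique x in N^perp with A x = P_M y.  Quasinormality, i.e.
   T A = A T, makes g commute with w, so T^n g^n = w^n.  Moreover
   (T^* )^n w^n = id on M, whence (T^n)^* T^n g^n y = P_M y, while N(T^n) = N
   because M and N meet only in 0.  So ((T^n)^* T^n)^dagger = g^n and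
   w(T^n) = T^n g^n = w^n.  Orthogonal projections onto closed subspaces exist
   because almost-nearest points form a Cauchy sequence (parallelogram law). *)

From Pilot Require Import Defs.
From mathcomp Require Import all_boot all_algebra.
From mathcomp Require Import complex.
From mathcomp Require Import all_classical reals.
From mathcomp Require Import ring.

Set Implicit Arguments.
Unset Strict Implicit.
Unset Printing Implicit Defensive.
Import order.Order.TTheory GRing.Theory Num.Theory.
Local Open Scope complex_scope.
Local Open Scope ring_scope.
Local Open Scope classical_set_scope.

Section InnerProduct.
Variables (R : realType) (V : lmodType R[i]) (ip : V -> V -> R[i]).
Hypothesis ip_inner : inner_product ip.

Lemma ipDl x y z : ip (x + y) z = ip x z + ip y z.
Proof. by case: ip_inner => lin _ _ _; rewrite -[x]scale1r lin mul1r scale1r. Qed.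

Lemma ip0l z : ip 0 z = 0.
Proof. by apply: (addrI (ip 0 z)); rewrite -ipDl !addr0. Qed.

Lemma ipZl a x z : ip (a *: x) z = a * ip x z.
Proof. by case: ip_inner => lin _ _ _; rewrite -[a *: x]addr0 lin ip0l addr0. Qed.

Lemma ipNl x z : ip (- x) z = - ip x z.
Proof. by rewrite -scaleN1r ipZl mulN1r. Qed.

Lemma ipBl x y z : ip (x - y) z = ip x z - ip y z.
Proof. by rewrite ipDl ipNl. Qed.

Lemma ipC x y : ip x y = (ip y x)^*.
Proof. by case: ip_inner. Qed.

Lemma ipDr x y z : ip z (x + y) = ip z x + ip z y.
Proof. by rewrite ipC [ip z x]ipC [ip z y]ipC ipDl rmorphD. Qed.

Lemma ipZr a x z : ip z (a *: x) = a^* * ip z x.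
Proof. by rewrite ipC [ip z x]ipC ipZl rmorphM. Qed.

Lemma ip0r z : ip z 0 = 0.
Proof. by rewrite ipC ip0l conjC0. Qed.

Lemma ipNr x z : ip z (- x) = - ip z x.
Proof. by rewrite ipC [ip z x]ipC ipNl rmorphN. Qed.

Lemma ipBr x y z : ip z (x - y) = ip z x - ip z y.
Proof. by rewrite ipDr ipNr. Qed.

Lemma ip_ge0 x : 0 <= ip x x.
Proof. by case: ip_inner. Qed.

Lemma ip_eq0 x : ip x x = 0 -> x = 0.
Proof. by case: ip_inner => _ _ _; apply. Qed.

Lemma conj_ip_self x : (ip x x)^* = ip x x.
Proof. by rewrite -ipC. Qed.

Lemma ip_sub_proj (b t : V) : ip t t != 0 ->
  ip (b - (ip b t / ip t t) *: t) (b - (ip b t / ip t t) *: t) =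
  ip b b - ip b t * (ip b t)^* / ip t t.
Proof.
move=> tt_neq0; rewrite ipBl !ipBr !ipZl !ipZr rmorphM /= fmorphV /=.
by rewrite conj_ip_self [ip t b]ipC; field.
Qed.

Lemma cauchy_schwarz (b t : V) : ip b t * (ip b t)^* <= ip t t * ip b b.
Proof.
have [/ip_eq0 -> | tt_neq0] := eqVneq (ip t t) 0.
  by rewrite ip0r mul0r ip0l mul0r.
have tt_gt0 : 0 < ip t t by rewrite lt_def tt_neq0 ip_ge0.
have := ip_ge0 (b - (ip b t / ip t t) *: t).
by rewrite ip_sub_proj // subr_ge0 ler_pdivrMr // [ip b b * _]mulrC.
Qed.

Lemma parallelogram a b :
  ip (a + b) (a + b) + ip (a - b) (a - b) = 2 * ip a a + 2 * ip b b.
Proof. by rewrite !ipDl !ipDr !ipNl !ipNr; ring. Qed.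

Lemma orthB (S : set V) a b : orth ip S a -> orth ip S b -> orth ip S (a - b).
Proof. by move=> Sa Sb x Sx; rewrite ipBr Sa // Sb // subrr. Qed.

Lemma orth_self_eq0 (S : set V) x : S x -> orth ip S x -> x = 0.
Proof. by move=> Sx Sx_orth; apply: ip_eq0; apply: Sx_orth. Qed.

Lemma dense_orth_eq0 (S : set V) w : is_dense ip S -> orth ip S w -> w = 0.
Proof.
move=> S_dense w_orth; apply: ip_eq0; apply/eqP; apply: contraT => ww_neq0.
have ww_gt0 : 0 < ip w w by rewrite lt_def ww_neq0 ip_ge0.
have [x Sx] := S_dense w _ ww_gt0.
rewrite /dist2 ipBl !ipBr [ip w x]ipC (w_orth x Sx) conjC0.
by rewrite !subr0 sub0r opprK gtrDl => /lt_le_trans/(_ (ip_ge0 x)); rewrite ltxx.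
Qed.

End InnerProduct.

Lemma subspaceB (R : realType) (V : lmodType R[i]) (S : set V) x y :
  is_subspace S -> S x -> S y -> S (x - y).
Proof. by move=> [_ S_lin] Sx Sy; rewrite addrC -scaleN1r; apply: S_lin. Qed.

Lemma mulD_conjC_le (R : rcfType) (c d : R[i]) :
  (c + d) * (c + d)^* <= 2 * (c * c^*) + 2 * (d * d^*).
Proof.
rewrite -subr_ge0.
have -> : 2 * (c * c^*) + 2 * (d * d^*) - (c + d) * (c + d)^* = (c - d) * (c - d)^*.
  by rewrite !rmorphD rmorphN /=; ring.
exact: mul_conjC_ge0.
Qed.

Lemma ge0_lt_all_eq0 (R : numDomainType) (a : R) :
  0 <= a -> (forall e, 0 < e -> a < e) -> a = 0.
Proof.
rewrite le_eqVlt => /predU1P[<- // | a_gt0] small.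
by have := small a a_gt0; rewrite ltxx.
Qed.

Section Projection.
Variables (R : realType) (V : lmodType R[i]) (ip : V -> V -> R[i]).
Hypothesis ip_inner : inner_product ip.
Hypothesis ip_complete : forall u, cauchy ip u -> exists x, converges ip u x.

Definition inv_succ (n : nat) : R[i] := ((n.+1%:R : R)^-1)%:C.

Lemma inv_succ_small (e : R[i]) : 0 < e ->
  exists N, forall n, (N <= n)%N -> inv_succ n < e.
Proof.
move=> e_gt0; have e_real := gtr0_real e_gt0.
rewrite -(RRe_real e_real) ltcR in e_gt0 *.
exists (Num.truncn (complex.Re e)^-1) => n le_Nn.
rewrite /inv_succ ltcR -[complex.Re e]invrK ltf_pV2 ?posrE ?invr_gt0 ?ltr0Sn //.
by apply: lt_le_trans (truncnS_gt _) _; rewrite ler_nat ltnS.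
Qed.

Definition almost_nearest (S : set V) (x s : V) (d : R[i]) :=
  S s /\ forall t, S t -> dist2 ip x s <= dist2 ip x t + d.

Lemma almost_nearest_exists (S : set V) x n : S 0 ->
  exists s, almost_nearest S x s (inv_succ n).
Proof.
move=> S0; pose f t := complex.Re (dist2 ip x t).
have dist2E t : (f t)%:C = dist2 ip x t by apply/RRe_real/ger0_real/ip_ge0.
have f_ge0 t : 0 <= f t by rewrite -lecR dist2E ip_ge0.
pose E := [set f t | t in S].
have E_inf : has_inf E by split; [exists (f 0), 0 | exists 0 => _ [t _ <-]].
have inv_gt0 : (0 : R) < n.+1%:R^-1 by rewrite invr_gt0 ltr0Sn.
have [_ [s Ss <-] fs_lt] := inf_adherent inv_gt0 E_inf.
exists s; split=> // t St; rewrite -!dist2E -rmorphD lecR.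
apply/ltW/(lt_le_trans fs_lt); rewrite lerD2r.
by apply: ge_inf; [case: E_inf | exists t].
Qed.

Lemma almost_nearest_close (S : set V) x s s' d d' : is_subspace S ->
  almost_nearest S x s d -> almost_nearest S x s' d' ->
  dist2 ip s s' <= 2 * d + 2 * d'.
Proof.
move=> [S0 S_lin] [Ss s_near] [Ss' s'_near].
pose mid := 2^-1 *: s' + 2^-1 *: s.
have S_mid : S mid by apply: (S_lin) => //; rewrite -[_ *: s]addr0; apply: S_lin.
have mid_dist : x - mid = 2^-1 *: ((x - s') + (x - s)).
  rewrite scalerDr !scalerBr -addrACA -scalerDl.
  by rewrite (_ : 2^-1 + 2^-1 = 1 :> R[i]) ?scale1r ?opprD //; field.
have conj_half : (2^-1 : R[i])^* = 2^-1 by rewrite fmorphV /= rmorph_nat.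
set m := dist2 ip x mid.
have par : dist2 ip s s' = 2 * dist2 ip x s' + 2 * dist2 ip x s - 4 * m.
  have := parallelogram ip_inner (x - s') (x - s).
  have -> : x - s' - (x - s) = s - s' by rewrite opprB addrC addrA subrK.
  have -> : ip (x - s' + (x - s)) (x - s' + (x - s)) = 4 * m.
    by rewrite /m /dist2 mid_dist (ipZl ip_inner) (ipZr ip_inner) conj_half; field.
  by rewrite /dist2 => par; apply: (addIr (4 * m)); rewrite -par; ring.
rewrite par (_ : 2 * d + 2 * d' = 2 * (m + d') + 2 * (m + d) - 4 * m); last by ring.
rewrite lerD2r; apply: lerD; rewrite ler_pM2l ?ltr0n //.
  exact: s'_near.
exact: s_near.
Qed.

Lemma almost_nearest_orth (S : set V) x s d t : is_subspace S ->
  almost_nearest S x s d -> S t ->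
  ip (x - s) t * (ip (x - s) t)^* <= d * ip t t.
Proof.
move=> [_ S_lin] [Ss s_near] St.
have [/(ip_eq0 ip_inner) -> | tt_neq0] := eqVneq (ip t t) 0.
  by rewrite (ip0r ip_inner) mul0r (ip0l ip_inner) mulr0.
have tt_gt0 : 0 < ip t t by rewrite lt_def tt_neq0 ip_ge0.
set c := ip (x - s) t / ip t t.
have S_shift : S (s + c *: t) by rewrite addrC; apply: S_lin.
have := s_near _ S_shift.
rewrite /dist2 opprD addrA (ip_sub_proj ip_inner) // -addrA lerDl.
by rewrite addrC subr_ge0 ler_pdivrMr.
Qed.

Lemma almost_nearest_cauchy (S : set V) x s : is_subspace S ->
  (forall n, almost_nearest S x (s n) (inv_succ n)) -> cauchy ip s.
Proof.
move=> S_sub s_near e e_gt0; have e4_gt0 : 0 < e / 4 by rewrite divr_gt0 ?ltr0n.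
have [N N_small] := inv_succ_small e4_gt0.
exists N => n m le_Nn le_Nm.
apply: le_lt_trans (almost_nearest_close S_sub (s_near n) (s_near m)) _.
rewrite (_ : e = 2 * (e / 4) + 2 * (e / 4)); last by field.
by apply: ltrD; rewrite ltr_pM2l ?ltr0n //; apply: N_small.
Qed.

Lemma almost_nearest_limit_orth (S : set V) x s p : is_subspace S ->
  (forall n, almost_nearest S x (s n) (inv_succ n)) -> converges ip s p ->
  orth ip S (x - p).
Proof.
move=> S_sub s_near s_to_p t St; rewrite (ipC ip_inner).
have [/(ip_eq0 ip_inner) -> | tt_neq0] := eqVneq (ip t t) 0.
  by rewrite (ip0r ip_inner) conjC0.
have tt_gt0 : 0 < ip t t by rewrite lt_def tt_neq0 ip_ge0.
suff /eqP : ip (x - p) t * (ip (x - p) t)^* = 0.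
  by rewrite mul_conjC_eq0 => /eqP ->; rewrite conjC0.
apply: ge0_lt_all_eq0; first exact: mul_conjC_ge0.
move=> e e_gt0; pose k := e / (4 * ip t t).
have k_gt0 : 0 < k by rewrite divr_gt0 // mulr_gt0 // ltr0n.
have [N1 N1_small] := inv_succ_small k_gt0.
have [N2 N2_close] := s_to_p k k_gt0.
pose n := maxn N1 N2.
have -> : x - p = (x - s n) + (s n - p) by rewrite addrA subrK.
rewrite (ipDl ip_inner); apply: le_lt_trans (mulD_conjC_le _ _) _.
have -> : e = 2 * (k * ip t t) + 2 * (ip t t * k).
  by rewrite /k; field; rewrite ?tt_neq0 ?pnatr_eq0.
apply: ler_ltD; rewrite ?ler_pM2l ?ltr_pM2l ?ltr0n //.
  apply: le_trans (almost_nearest_orth S_sub (s_near n) St) _.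
  by rewrite ler_pM2r // ltW // N1_small // leq_maxl.
apply: le_lt_trans (cauchy_schwarz ip_inner _ _) _.
by rewrite ltr_pM2l // N2_close // leq_maxr.
Qed.

Theorem orth_proj_exists (S : set V) : is_subspace S -> is_closed ip S ->
  forall x, exists p, S p /\ orth ip S (x - p).
Proof.
move=> S_sub S_closed x.
have /choice [s s_near] := fun n => almost_nearest_exists x n S_sub.1.
have [p s_to_p] := ip_complete (almost_nearest_cauchy S_sub s_near).
exists p; split; last exact: almost_nearest_limit_orth S_sub s_near s_to_p.
exact: S_closed s p (fun n => (s_near n).1) s_to_p.
Qed.

End Projection.

Section PairSpace.
Variables (R : realType) (V : lmodType R[i]) (ip : V -> V -> R[i]).
Hypothesis ip_inner : inner_product ip.

Definition ip_pair (u v : V * V) : R[i] := ip u.1 v.1 + ip u.2 v.2.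

Lemma ip_pair_inner : inner_product ip_pair.
Proof.
split.
- by move=> a x y z; rewrite /ip_pair /= !(ipDl ip_inner) !(ipZl ip_inner); ring.
- by move=> x y; rewrite /ip_pair rmorphD /= -!(ipC ip_inner).
- by move=> x; rewrite /ip_pair addr_ge0 ?(ip_ge0 ip_inner).
- move=> [x1 x2] /eqP; rewrite /ip_pair paddr_eq0 ?(ip_ge0 ip_inner) //=.
  by move=> /andP[/eqP/(ip_eq0 ip_inner) -> /eqP/(ip_eq0 ip_inner) ->].
Qed.

Lemma dist2_pair_fst u v : dist2 ip u.1 v.1 <= dist2 ip_pair u v.
Proof. by rewrite lerDl (ip_ge0 ip_inner). Qed.

Lemma dist2_pair_snd u v : dist2 ip u.2 v.2 <= dist2 ip_pair u v.
Proof. by rewrite lerDr (ip_ge0 ip_inner). Qed.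

Lemma converges_pair_fst u z :
  converges ip_pair u z -> converges ip (fun n => (u n).1) z.1.
Proof.
move=> u_to_z e /u_to_z [N N_close]; exists N => n le_Nn.
exact: le_lt_trans (dist2_pair_fst _ _) (N_close n le_Nn).
Qed.

Lemma converges_pair_snd u z :
  converges ip_pair u z -> converges ip (fun n => (u n).2) z.2.
Proof.
move=> u_to_z e /u_to_z [N N_close]; exists N => n le_Nn.
exact: le_lt_trans (dist2_pair_snd _ _) (N_close n le_Nn).
Qed.

Lemma ip_pair_complete :
  (forall u, cauchy ip u -> exists x, converges ip u x) ->
  forall u, cauchy ip_pair u -> exists x, converges ip_pair u x.
Proof.
move=> ip_complete u u_cauchy.
have [x1 to_x1] : exists x1, converges ip (fun n => (u n).1) x1.
  apply: ip_complete => e /u_cauchy [N N_close]; exists N => n m le_Nn le_Nm.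
  exact: le_lt_trans (dist2_pair_fst _ _) (N_close n m le_Nn le_Nm).
have [x2 to_x2] : exists x2, converges ip (fun n => (u n).2) x2.
  apply: ip_complete => e /u_cauchy [N N_close]; exists N => n m le_Nn le_Nm.
  exact: le_lt_trans (dist2_pair_snd _ _) (N_close n m le_Nn le_Nm).
exists (x1, x2) => e e_gt0.
have e2_gt0 : 0 < e / 2 by rewrite divr_gt0 ?ltr0n.
have [N1 N1_close] := to_x1 _ e2_gt0; have [N2 N2_close] := to_x2 _ e2_gt0.
exists (maxn N1 N2) => n le_Nn; rewrite (_ : e = e / 2 + e / 2); last by field.
apply: ltrD; [apply: N1_close | apply: N2_close];
  by apply: leq_trans le_Nn; rewrite ?leq_maxl ?leq_maxr.
Qed.

End PairSpace.

Section Operators.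
Variables (R : realType) (V : lmodType R[i]) (ip : V -> V -> R[i]).
Hypothesis ip_inner : inner_product ip.

Definition linear_op (X : op V) : Prop :=
  is_subspace (dom X) /\ forall a x y, dom X x -> dom X y ->
    app X (a *: x + y) = a *: app X x + app X y.

Lemma linear_op0 (X : op V) : linear_op X -> dom X 0 /\ app X 0 = 0.
Proof.
move=> [[D0 _] X_lin]; split=> //.
by have := X_lin (-1) 0 0 D0 D0; rewrite scaler0 addr0 scaleN1r addNr.
Qed.

Lemma linear_opB (X : op V) x y : linear_op X -> dom X x -> dom X y ->
  dom X (x - y) /\ app X (x - y) = app X x - app X y.
Proof.
move=> [[_ D_lin] X_lin] Dx Dy.
have := D_lin (-1) y x Dy Dx; have := X_lin (-1) y x Dy Dx.
by rewrite !scaleN1r ![_ + x]addrC ![_ + app X x]addrC.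
Qed.

Lemma comp_linear (X Y : op V) :
  linear_op X -> linear_op Y -> linear_op (Defs.comp X Y).
Proof.
move=> X_lin Y_lin; have [DX0 X0] := linear_op0 X_lin.
have [DY0 Y0] := linear_op0 Y_lin.
case: X_lin Y_lin => [[_ DX_lin] X_lin] [[_ DY_lin] Y_lin].
split; first split.
- by split; rewrite //= Y0.
- move=> a x y [Dx DXx] [Dy DXy]; split; first exact: DY_lin.
  by rewrite /= Y_lin //; apply: DX_lin.
- by move=> a x y [Dx DXx] [Dy DXy]; rewrite /= Y_lin // X_lin.
Qed.

Lemma id_op_linear : linear_op (id_op V).
Proof. by split; [split | move=> a x y _ _]. Qed.

Lemma op_pow_linear (X : op V) n : linear_op X -> linear_op (op_pow X n).
Proof.
by move=> X_lin; elim: n => [|n IHn] /=; [exact: id_op_linear | exact: comp_linear].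
Qed.

Lemma app_op_pow (X : op V) n x : app (op_pow X n) x = iter n (app X) x.
Proof. by elim: n => //= n ->. Qed.

Lemma dom_op_powP (X : op V) n x :
  dom (op_pow X n) x <-> forall i, (i < n)%N -> dom X (iter i (app X) x).
Proof.
elim: n => [|n IHn] /=; first by split.
rewrite app_op_pow; split.
- move=> [/IHn D_lt Dn] i; rewrite ltnS leq_eqVlt => /predU1P[-> // | ].
  exact: D_lt.
- by move=> D_lt; split; [apply/IHn => i lt_in; apply/D_lt/ltnW | apply: D_lt].
Qed.

Lemma dom_op_powS (X : op V) n x :
  dom (op_pow X n.+1) x <-> dom X x /\ dom (op_pow X n) (app X x).
Proof.
rewrite !dom_op_powP; split=> [D_lt | [Dx D_lt] [|i] //].
  by split=> [|i lt_in]; [exact: (D_lt 0%N) | rewrite -iterSr; apply: D_lt].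
by rewrite ltnS iterSr; apply: D_lt.
Qed.

Lemma null_space_subspace (X : op V) : linear_op X -> is_subspace (null_space X).
Proof.
move=> X_lin; have [D0 X0] := linear_op0 X_lin.
split=> // a x y [Dx Xx] [Dy Xy]; case: X_lin => [[_ D_lin] X_lin].
by split; [apply: D_lin | rewrite X_lin // Xx Xy scaler0 addr0].
Qed.

Lemma range_subspace (X : op V) : linear_op X -> is_subspace (Defs.range X).
Proof.
move=> X_lin; have [D0 X0] := linear_op0 X_lin.
split; first by exists 0.
move=> a _ _ [x Dx <-] [y Dy <-]; case: X_lin => [[_ D_lin] X_lin].
by exists (a *: x + y); [apply: D_lin | apply: X_lin].
Qed.

Lemma null_space_closed (X : op V) :
  densely_defined_closed ip X -> is_closed ip (null_space X).
Proof.
move=> [_ _ _ X_closed] u x u_null u_to_x.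
have Xu_to_0 : converges ip (fun n => app X (u n)) 0.
  move=> e e_gt0; exists 0%N => n _.
  by rewrite (u_null n).2 /dist2 subr0 (ip0l ip_inner).
by have [] := X_closed u x 0 (fun n => (u_null n).1) u_to_x Xu_to_0.
Qed.

Lemma null_space_iter (X : op V) i x : linear_op X -> null_space X x ->
  iter i.+1 (app X) x = 0.
Proof.
by move=> /linear_op0[D0 X0] [Dx Xx]; elim: i => //= i ->.
Qed.

Lemma null_space_dom_op_pow (X : op V) n : linear_op X ->
  null_space X `<=` dom (op_pow X n).
Proof.
move=> X_lin x Nx; apply/dom_op_powP => -[|i] _; first by case: Nx.
by rewrite (null_space_iter i X_lin Nx); case: (linear_op0 X_lin).
Qed.

Lemma null_space_op_pow (X : op V) n : linear_op X ->
  null_space X `<=` null_space (op_pow X n.+1).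
Proof.
move=> X_lin x Nx; split; first exact: null_space_dom_op_pow.
by rewrite app_op_pow (null_space_iter n X_lin Nx).
Qed.

End Operators.

Section Adjoint.
Variables (R : realType) (V : lmodType R[i]) (ip : V -> V -> R[i]).
Hypothesis ip_inner : inner_product ip.

(* Weaker than density, but all that makes [adjoint] single-valued; unlike
   density it is easy to check for the powers of T below. *)
Definition orth_dom_trivial (X : op V) : Prop :=
  forall w, orth ip (dom X) w -> w = 0.

Lemma adjointE (X : op V) y z : orth_dom_trivial X -> adj_rel ip X y z ->
  dom (adjoint ip X) y /\ app (adjoint ip X) y = z.
Proof.
move=> X_triv yz; split; first by exists z.
apply: xget_unique => // z' yz'; apply/eqP; rewrite -subr_eq0; apply/eqP.
by apply: X_triv => x Dx; rewrite (ipBr ip_inner) -yz' // -yz // subrr.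
Qed.

Lemma adjointP (X : op V) y :
  dom (adjoint ip X) y -> adj_rel ip X y (app (adjoint ip X) y).
Proof. exact: xgetPex. Qed.

Lemma adjoint_linear (X : op V) : orth_dom_trivial X -> linear_op (adjoint ip X).
Proof.
move=> X_triv.
have adj_lin a y y' : dom (adjoint ip X) y -> dom (adjoint ip X) y' ->
    adj_rel ip X (a *: y + y') (a *: app (adjoint ip X) y + app (adjoint ip X) y').
  move=> /adjointP yz /adjointP yz' x Dx.
  by rewrite !(ipDr ip_inner) !(ipZr ip_inner) yz // yz'.
split; first split.
- by exists 0 => x Dx; rewrite !(ip0r ip_inner).
- by move=> a y y' Dy Dy'; eexists; apply: adj_lin.
- by move=> a y y' Dy Dy'; apply: (adjointE X_triv (adj_lin a y y' Dy Dy')).2.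
Qed.

Lemma adjoint_op_pow (X : op V) n x u :
  dom (op_pow X n) x -> dom (op_pow (adjoint ip X) n) u ->
  ip (iter n (app X) x) u = ip x (iter n (app (adjoint ip X)) u).
Proof.
elim: n x u => // n IHn x u /dom_op_powS[Dx DXx] [Du DX'u].
rewrite app_op_pow in DX'u.
by rewrite iterSr IHn // (adjointP DX'u Dx) iterS.
Qed.

Definition gram (X : op V) : op V := Defs.comp (adjoint ip X) X.

Lemma gram_linear (X : op V) : orth_dom_trivial X -> linear_op X ->
  linear_op (gram X).
Proof. by move=> X_triv X_lin; apply: comp_linear (adjoint_linear X_triv) X_lin. Qed.

Lemma null_space_gram (X : op V) : orth_dom_trivial X -> linear_op X ->
  null_space (gram X) = null_space X.
Proof.
move=> X_triv X_lin; apply/funext => x; apply/propext; split.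
- move=> [[Dx DXx] XXx]; split=> //; apply: (ip_eq0 ip_inner).
  by rewrite (adjointP DXx Dx); move: XXx => /= ->; rewrite (ip0r ip_inner).
- move=> [Dx Xx]; have [D0 X'0] := linear_op0 (adjoint_linear X_triv).
  by split; rewrite /= Xx.
Qed.

Lemma range_gram_orth (X : op V) :
  Defs.range (gram X) `<=` orth ip (null_space X).
Proof.
by move=> _ [z [Dz DXz] <-] n [Dn Xn]; rewrite -(adjointP DXz Dn) Xn (ip0l ip_inner).
Qed.

Lemma null_orth_range_adjoint (X : op V) n m :
  null_space X n -> Defs.range (adjoint ip X) m -> ip n m = 0.
Proof.
by move=> [Dn Xn] [y Dy <-]; rewrite -(adjointP Dy Dn) Xn (ip0l ip_inner).
Qed.

End Adjoint.

Section HilbertSpace.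
Variables (R : realType) (V : lmodType R[i]) (ip : V -> V -> R[i]).
Hypothesis ip_inner : inner_product ip.
Hypothesis ip_complete : forall u, cauchy ip u -> exists x, converges ip u x.

Definition graph (X : op V) : set (V * V) := [set u | dom X u.1 /\ u.2 = app X u.1].

Lemma graph_subspace (X : op V) : linear_op X -> is_subspace (graph X).
Proof.
move=> X_lin; have [D0 X0] := linear_op0 X_lin.
split; first by rewrite /graph /= X0.
move=> a u v [Du Xu] [Dv Xv]; case: X_lin => [[_ D_lin] X_lin].
by split; [apply: D_lin | rewrite /= X_lin // Xu Xv].
Qed.

Lemma graph_closed (X : op V) :
  densely_defined_closed ip X -> is_closed (ip_pair ip) (graph X).
Proof.
move=> [_ _ _ X_closed] u z u_graph u_to_z.
have Xu_to_z2 : converges ip (fun n => app X (u n).1) z.2.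
  move=> e /(converges_pair_snd ip_inner u_to_z) [N N_close].
  by exists N => n /N_close; rewrite (u_graph n).2.
have u1_to_z1 := converges_pair_fst ip_inner u_to_z.
by have [] := X_closed _ _ _ (fun n => (u_graph n).1) u1_to_z1 Xu_to_z2.
Qed.

Lemma orth_range_adjoint_null (X : op V) s : densely_defined_closed ip X ->
  orth ip (Defs.range (adjoint ip X)) s -> null_space X s.
Proof.
move=> X_ddc s_orth.
have X_lin : linear_op X by case: X_ddc.
have X_triv : orth_dom_trivial ip X.
  by case: X_ddc => _ _ X_dense _ w; apply: dense_orth_eq0.
have [[x y] [[/= Dx ->] sx_orth]] := orth_proj_exists (ip_pair_inner ip_inner)
  (ip_pair_complete ip_inner ip_complete) (graph_subspace X_lin)
  (graph_closed X_ddc) (s, 0).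
pose q := s - x.
have q_adj : adj_rel ip X (app X x) q.
  move=> x' Dx'; have := sx_orth (x', app X x') (conj Dx' erefl).
  by rewrite /ip_pair /= sub0r (ipNr ip_inner) => /eqP; rewrite subr_eq0 => /eqP.
have [DXx X'Xx] := adjointE ip_inner X_triv q_adj.
have Xq : Defs.range (adjoint ip X) q by exists (app X x).
have qx : ip q x = ip (app X x) (app X x).
  by rewrite (ipC ip_inner) -(q_adj x Dx) (conj_ip_self ip_inner).
have := s_orth q Xq; rewrite -[s](subrK x) -/q (ipDr ip_inner) qx.
move/eqP; rewrite paddr_eq0 ?(ip_ge0 ip_inner) //.
by move=> /andP[/eqP/(ip_eq0 ip_inner) -> /eqP/(ip_eq0 ip_inner) Xx0]; rewrite add0r.
Qed.

Lemma range_partE (X : op V) y r : linear_op X ->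
  Defs.range X r -> orth ip (Defs.range X) (y - r) -> range_part ip X y = r.
Proof.
move=> X_lin Xr yr; apply: xget_unique => // r' [Xr' yr'].
have yd : (y - r') - (y - r) = r - r' by rewrite opprB addrC addrA subrK.
have : r - r' = 0.
  apply: (orth_self_eq0 ip_inner (subspaceB (range_subspace X_lin) Xr Xr')).
  by rewrite -yd; apply: orthB.
by move/eqP; rewrite subr_eq0 => /eqP.
Qed.

Lemma range_part_spec (X : op V) y : linear_op X -> is_closed ip (Defs.range X) ->
  Defs.range X (range_part ip X y) /\
  orth ip (Defs.range X) (y - range_part ip X y).
Proof.
move=> X_lin X_closed.
have [r [Xr yr]] :=
  orth_proj_exists ip_inner ip_complete (range_subspace X_lin) X_closed y.
by rewrite (range_partE X_lin Xr yr).
Qed.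

Lemma mp_inverse_dom (X : op V) y : linear_op X -> is_closed ip (Defs.range X) ->
  dom (mp_inverse ip X) y.
Proof.
move=> X_lin X_closed; have [Xr yr] := range_part_spec y X_lin X_closed.
by exists (range_part ip X y), (y - range_part ip X y); split; rewrite // addrC subrK.
Qed.

Lemma mp_inverseE (X : op V) x y : linear_op X ->
  coimage ip X x -> app X x = range_part ip X y -> app (mp_inverse ip X) y = x.
Proof.
move=> X_lin [Dx x_orth] Xx; apply: xget_unique => // x' [[Dx' x'_orth] Xx'].
have [Dd Xd] := linear_opB X_lin Dx' Dx.
have null_d : null_space X (x' - x) by split=> //; rewrite Xd Xx' Xx subrr.
move: (orth_self_eq0 ip_inner null_d (orthB ip_inner x'_orth x_orth)) => /eqP.
by rewrite subr_eq0 => /eqP.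
Qed.

Lemma mp_inverse_spec (X : op V) y : linear_op X ->
  is_closed ip (null_space X) -> Defs.range X (range_part ip X y) ->
  coimage ip X (app (mp_inverse ip X) y) /\
  app X (app (mp_inverse ip X) y) = range_part ip X y.
Proof.
move=> X_lin N_closed [x0 Dx0 Xx0].
have [n0 [[Dn0 Xn0] x0_orth]] :=
  orth_proj_exists ip_inner ip_complete (null_space_subspace X_lin) N_closed x0.
have [Dd Xd] := linear_opB X_lin Dx0 Dn0.
rewrite Xn0 subr0 Xx0 in Xd.
by rewrite (mp_inverseE X_lin (conj Dd x0_orth) Xd).
Qed.

Lemma cauchy_dual_id : op_eq (cauchy_dual ip (id_op V)) (id_op V).
Proof.
have id_triv : orth_dom_trivial ip (id_op V).
  by move=> w w_orth; apply: (ip_eq0 ip_inner); apply: w_orth.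
have adj_id y : dom (adjoint ip (id_op V)) y /\ app (adjoint ip (id_op V)) y = y.
  exact: adjointE.
pose B := gram ip (id_op V).
have B_lin : linear_op B := gram_linear ip_inner id_triv (@id_op_linear R V).
have DB y : dom B y := conj I (adj_id y).1.
have By y : app B y = y := (adj_id y).2.
have rpB y : range_part ip B y = y.
  apply: range_partE => //; first by exists y.
  by move=> x _; rewrite subrr (ip0r ip_inner).
have B_coim y : coimage ip B y.
  by split=> // x [_ Bx]; rewrite -(By x) Bx (ip0l ip_inner).
split=> [|y _].
  apply/funext => y; apply/propext; split=> // _; split=> //.
  exists y, 0; split; rewrite ?addr0 //; first by exists y.
  by move=> x _; rewrite (ip0r ip_inner).
change (app (mp_inverse ip B) y = y).
by rewrite (mp_inverseE B_lin (B_coim y)) ?By ?rpB.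
Qed.

End HilbertSpace.

Section EPOperator.
Variables (R : realType) (V : lmodType R[i]) (ip : V -> V -> R[i]) (T : op V).
Hypothesis ip_inner : inner_product ip.
Hypothesis ip_complete : forall u, cauchy ip u -> exists x, converges ip u x.
Hypothesis T_ddc : densely_defined_closed ip T.
Hypothesis T_EP : EP ip T.

Local Notation t := (app T).
Local Notation D := (dom T).
Local Notation Ts := (adjoint ip T).
Local Notation ts := (app Ts).
Local Notation M := (Defs.range T).
Local Notation N := (null_space T).
Local Notation P := (range_part ip T).
Local Notation A := (gram ip T).
Local Notation g := (app (mp_inverse ip A)).

Lemma T_linear : linear_op T.
Proof. by case: T_ddc. Qed.

Lemma T_orth_dom_trivial : orth_dom_trivial ip T.
Proof. by case: T_ddc => _ _ T_dense _ w; apply: dense_orth_eq0. Qed.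

Lemma adjoint_T_linear : linear_op Ts.
Proof. exact: (adjoint_linear ip_inner T_orth_dom_trivial). Qed.

Lemma range_T_closed : is_closed ip M.
Proof. by case: T_EP. Qed.

Lemma range_adjoint_T : Defs.range Ts = M.
Proof. by case: T_EP. Qed.

Lemma range_part_T_spec y : M (P y) /\ orth ip M (y - P y).
Proof. exact: (range_part_spec ip_inner ip_complete y T_linear range_T_closed). Qed.

Lemma range_part_T_id m : M m -> P m = m.
Proof.
move=> Mm; apply: (range_partE ip_inner T_linear Mm) => x _.
by rewrite subrr (ip0r ip_inner).
Qed.

Lemma null_orth_range_T n m : N n -> M m -> ip n m = 0.
Proof. by rewrite -range_adjoint_T; apply: null_orth_range_adjoint. Qed.

Lemma range_null_T_eq0 x : M x -> N x -> x = 0.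
Proof. by move=> Mx Nx; apply: (ip_eq0 ip_inner); apply: null_orth_range_T. Qed.

Lemma orth_range_T_null s : orth ip M s -> N s.
Proof.
rewrite -range_adjoint_T.
exact: (orth_range_adjoint_null ip_inner ip_complete T_ddc).
Qed.

Lemma orth_null_T_range v : orth ip N v -> M v.
Proof.
move=> v_orth; have [MPv vPv_orth] := range_part_T_spec v.
have Ns := orth_range_T_null vPv_orth.
have : ip (v - P v) (v - P v) = 0.
  by rewrite (ipBr ip_inner) v_orth // (ipC ip_inner) vPv_orth // conjC0 subrr.
by move/(ip_eq0 ip_inner)/eqP; rewrite subr_eq0 => /eqP ->.
Qed.

Lemma null_gram_T : null_space A = N.
Proof. exact: (null_space_gram ip_inner T_orth_dom_trivial T_linear). Qed.

Lemma range_gram_T : Defs.range A = M.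
Proof.
apply/funext => m; apply/propext; split.
  by move=> [x [_ DTx] <-]; rewrite -range_adjoint_T; exists (t x).
rewrite -{1}range_adjoint_T => -[y Dy <-].
have [[x Dx <-] yPy_orth] := range_part_T_spec y.
have yPy_adj : adj_rel ip T (y - t x) 0.
  by move=> x' Dx'; rewrite (ip0r ip_inner); apply: yPy_orth; exists x'.
have [D_yPy ts_yPy] := adjointE ip_inner T_orth_dom_trivial yPy_adj.
have [DPy tsPy] := linear_opB adjoint_T_linear Dy D_yPy.
rewrite opprB addrC subrK ts_yPy subr0 in DPy tsPy.
by exists x.
Qed.

Lemma range_part_gram_T : range_part ip A = P.
Proof. by rewrite /range_part range_gram_T. Qed.

Lemma gram_T_linear : linear_op A.
Proof. exact: (gram_linear ip_inner T_orth_dom_trivial T_linear). Qed.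

Lemma mp_gram_T_spec y : [/\ dom A (g y), orth ip N (g y) & app A (g y) = P y].
Proof.
have null_closed : is_closed ip (null_space A).
  by rewrite null_gram_T; exact: (null_space_closed ip_inner T_ddc).
have MPy : Defs.range A (range_part ip A y).
  by rewrite range_part_gram_T range_gram_T; exact: (range_part_T_spec y).1.
have [[DAg g_orth] Ag] :=
  mp_inverse_spec ip_inner ip_complete gram_T_linear null_closed MPy.
by rewrite null_gram_T range_part_gram_T in g_orth Ag.
Qed.

Lemma mp_gram_T_dom y : D (g y).
Proof. by case: (mp_gram_T_spec y) => -[]. Qed.

Lemma mp_gram_T_range y : M (g y).
Proof. by apply: orth_null_T_range; case: (mp_gram_T_spec y). Qed.

Lemma mp_gram_T_total y : dom (mp_inverse ip A) y.
Proof.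
apply: (mp_inverse_dom ip_inner ip_complete _ gram_T_linear).
by rewrite range_gram_T; exact: range_T_closed.
Qed.

Lemma mp_gram_TE x y : dom A x -> orth ip N x -> app A x = P y -> g y = x.
Proof.
move=> DAx x_orth Ax; apply: (mp_inverseE ip_inner gram_T_linear).
  by split; rewrite // null_gram_T.
by rewrite range_part_gram_T.
Qed.

Lemma mp_gram_T_proj y : g (P y) = g y.
Proof.
have [DAg g_orth Ag] := mp_gram_T_spec y.
by apply: mp_gram_TE; rewrite // Ag (range_part_T_id (range_part_T_spec y).1).
Qed.

Lemma adjoint_cauchy_dual_T z : dom Ts (t (g z)) /\ ts (t (g z)) = P z.
Proof. by case: (mp_gram_T_spec z) => -[_ ?] _. Qed.

Lemma mp_gram_T_sym a b : ip (g a) b = ip a (g b).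
Proof.
suff ip_g c d : ip (g c) d = ip (t (g c)) (t (g d)).
  by rewrite ip_g (ipC ip_inner a) ip_g -(ipC ip_inner).
have [MPd dPd_orth] := range_part_T_spec d.
have -> : ip (g c) d = ip (g c) (P d) + ip (g c) (d - P d).
  by rewrite -(ipDr ip_inner) addrC subrK.
rewrite dPd_orth ?addr0; last exact: mp_gram_T_range.
have [DAg _ <-] := mp_gram_T_spec d.
by rewrite -(adjointP DAg.2 (mp_gram_T_dom c)).
Qed.

Lemma iter_mp_gram_T_sym k a b : ip (iter k g a) b = ip a (iter k g b).
Proof. by elim: k a b => // k IHk a b; rewrite iterS mp_gram_T_sym IHk -iterSr. Qed.

Lemma iter_mp_gram_T_inj k v : M v -> iter k g v = 0 -> v = 0.
Proof.
elim: k v => // k IHk v Mv; rewrite iterSr => /(IHk _ (mp_gram_T_range v)) gv0.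
have [_ _ Agv] := mp_gram_T_spec v.
by rewrite -(range_part_T_id Mv) -Agv gv0 (linear_op0 gram_T_linear).2.
Qed.

Lemma null_op_pow_T k : null_space (op_pow T k.+1) = N.
Proof.
apply/funext => x; apply/propext; split; last exact: (null_space_op_pow k T_linear).
elim: k x => [|k IHk] x [Dx Tx0]; first by case: Dx => _ Dx; split.
have [[DTk DTkx] DTk1x] := Dx.
apply: IHk; split=> //; apply: range_null_T_eq0; last by split.
by exists (app (op_pow T k) x).
Qed.

Hypothesis T_quasinormal : quasinormal ip T.

Local Notation w := (app (cauchy_dual ip T)).

Lemma cauchy_dual_T_range z : M (w z).
Proof. by exists (g z); first exact: mp_gram_T_dom. Qed.

Lemma iter_cauchy_dual_T_range m y : M y -> M (iter m w y).
Proof. by case: m => // m _; exact: cauchy_dual_T_range. Qed.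

Lemma mp_gram_T_cauchy_dual_comm z : g (w z) = w (g z).
Proof.
have [DAv _ Av] := mp_gram_T_spec (g z).
rewrite (range_part_T_id (mp_gram_T_range z)) in Av.
have [dom_eq app_eq] := T_quasinormal.
have DTAv : dom (Defs.comp T A) (g (g z)).
  by split; rewrite // Av; exact: mp_gram_T_dom.
have [DTv DATv] : dom (Defs.comp A T) (g (g z)) by rewrite -dom_eq.
apply: mp_gram_TE => //.
  by move=> n Nn; apply: null_orth_range_T => //; exists (g (g z)).
have TA_AT : t (app A (g (g z))) = app A (t (g (g z))) := app_eq _ DTAv.
rewrite -TA_AT Av.
by rewrite range_part_T_id //; exact: cauchy_dual_T_range.
Qed.

Lemma iter_cauchy_dual_mp_gram_T k z : iter k w (g z) = g (iter k w z).
Proof.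
by elim: k z => // k IHk z; rewrite !iterS IHk mp_gram_T_cauchy_dual_comm.
Qed.

Lemma iter_T_mp_gram_T k u : iter k t (iter k g u) = iter k w u.
Proof.
elim: k u => // k IHk u.
by rewrite [iter k.+1 g u]iterSr iterS IHk iter_cauchy_dual_mp_gram_T iterS.
Qed.

Lemma dom_op_pow_mp_gram_T n y : dom (op_pow T n) (iter n g y).
Proof.
apply/dom_op_powP => i lt_in.
rewrite -(subnKC (ltnW lt_in)) iterD -(subnSK lt_in) iterS iter_T_mp_gram_T.
by rewrite iter_cauchy_dual_mp_gram_T; exact: mp_gram_T_dom.
Qed.

Lemma op_pow_T_orth_dom_trivial n : orth_dom_trivial ip (op_pow T n).
Proof.
move=> v v_orth; have Mv : M v.
  by apply: orth_null_T_range => x Nx; apply/v_orth/(null_space_dom_op_pow n T_linear).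
have := v_orth _ (dom_op_pow_mp_gram_T n (iter n g v)).
by rewrite iter_mp_gram_T_sym => /(ip_eq0 ip_inner); apply: iter_mp_gram_T_inj.
Qed.

Lemma adjoint_iter_cauchy_dual_T i m y : M y ->
  iter i ts (iter (i + m) w y) = iter m w y.
Proof.
move=> My; elim: i m => // i IHi m.
rewrite iterS addSnnS IHi iterS (adjoint_cauchy_dual_T (iter m w y)).2.
by rewrite range_part_T_id //; exact: iter_cauchy_dual_T_range.
Qed.

Lemma dom_adjoint_op_pow_cauchy_dual_T n y : M y -> dom (op_pow Ts n) (iter n w y).
Proof.
move=> My; apply/dom_op_powP => i lt_in.
rewrite -(subnKC (ltnW lt_in)) adjoint_iter_cauchy_dual_T // -(subnSK lt_in).
exact: (adjoint_cauchy_dual_T _).1.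
Qed.

Lemma gram_op_pow_T_mp_gram_T k y :
  dom (gram ip (op_pow T k.+1)) (iter k.+1 g y) /\
  app (gram ip (op_pow T k.+1)) (iter k.+1 g y) = P y.
Proof.
have MPy : M (P y) := (range_part_T_spec y).1.
have T_gy : app (op_pow T k.+1) (iter k.+1 g y) = iter k.+1 w (P y).
  rewrite app_op_pow iter_T_mp_gram_T !iterSr.
  by congr (iter k w (t _)); rewrite mp_gram_T_proj.
have Py_adj : adj_rel ip (op_pow T k.+1) (iter k.+1 w (P y)) (P y).
  move=> x Dx; rewrite app_op_pow adjoint_op_pow //.
    by rewrite -[in iter k.+1 w _](addn0 k.+1) adjoint_iter_cauchy_dual_T.
  exact: dom_adjoint_op_pow_cauchy_dual_T.
have [DSPy SPy] := adjointE ip_inner (op_pow_T_orth_dom_trivial (n:=k.+1)) Py_adj.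
rewrite -T_gy in DSPy SPy.
by split; first split; [exact: dom_op_pow_mp_gram_T | exact: DSPy | exact: SPy].
Qed.

Lemma gram_op_pow_T_linear k : linear_op (gram ip (op_pow T k.+1)).
Proof.
have S_triv := op_pow_T_orth_dom_trivial (n:=k.+1).
exact: (gram_linear ip_inner S_triv (op_pow_linear _ T_linear)).
Qed.

Lemma range_gram_op_pow_T k : Defs.range (gram ip (op_pow T k.+1)) = M.
Proof.
apply/funext => m; apply/propext; split => [Sm | Mm].
  by apply: orth_null_T_range; rewrite -(null_op_pow_T k); exact: range_gram_orth.
have [DSg Sg] := gram_op_pow_T_mp_gram_T k m.
by exists (iter k.+1 g m); rewrite // Sg range_part_T_id.
Qed.

Lemma mp_gram_op_pow_T k y :
  app (mp_inverse ip (gram ip (op_pow T k.+1))) y = iter k.+1 g y.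
Proof.
have S_triv := op_pow_T_orth_dom_trivial (n:=k.+1).
have [DSg Sg] := gram_op_pow_T_mp_gram_T k y.
apply: (mp_inverseE ip_inner (gram_op_pow_T_linear k)).
  split=> //; rewrite (null_space_gram ip_inner S_triv (op_pow_linear _ T_linear)).
  rewrite null_op_pow_T iterS.
  by case: (mp_gram_T_spec (iter k g y)).
by rewrite Sg /range_part range_gram_op_pow_T.
Qed.

Lemma cauchy_dual_op_pow_T k :
  op_eq (cauchy_dual ip (op_pow T k.+1)) (op_pow (cauchy_dual ip T) k.+1).
Proof.
split=> [|y _]; last first.
  by rewrite app_op_pow -iter_T_mp_gram_T -mp_gram_op_pow_T -app_op_pow.
apply/funext => y; apply/propext; split=> _; last first.
  split; last by rewrite mp_gram_op_pow_T; exact: dom_op_pow_mp_gram_T.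
  apply: (mp_inverse_dom ip_inner ip_complete _ (gram_op_pow_T_linear k)).
  by rewrite range_gram_op_pow_T; exact: range_T_closed.
by apply/dom_op_powP => i _; split; [exact: mp_gram_T_total | exact: mp_gram_T_dom].
Qed.

End EPOperator.

Theorem theorem2p18 (R : realType) (V : lmodType R[i]) (ip : V -> V -> R[i])
  (T : op V) :
  hilbert_space ip ->
  densely_defined_closed ip T ->
  quasinormal ip T ->
  EP ip T ->
  forall n : nat,
    op_eq (cauchy_dual ip (op_pow T n)) (op_pow (cauchy_dual ip T) n).
Proof.
move=> [ip_inner ip_complete] T_ddc T_quasinormal T_EP [|k].
  exact: cauchy_dual_id.
exact: cauchy_dual_op_pow_T.
Qed.
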